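(* For all integers $L\ge1$ and $M\ge L+1$, $$\min_{w\in\mathbb{R}^L}\|Bw-\mathbf 1\|_2=\left[\frac{\binom{M+L+1}{L+1}}{\binom{M}{L+1}}-1\right]^{-1/2}.$$ Moreover, there exist absolute constants $0<c_1\le c_2$ such that for all integers $L\ge1$ and $M\ge L+1$, $$\exp\Big(c_1\frac{L^2}{M}\Big)\le\frac{\binom{M+L+1}{L+1}}{\binom{M}{L+1}}\le\exp\Big(c_2\frac{L^2}{M}\Big),$$ i.e. the minimum equals $\big[\exp(\Theta(L^2/M))-1\big]^{-1/2}$.
   Context: $B$ is the $M\times L$ real matrix with entries $B_{ij}=(i/M)^j$ for $1\le i\le M$, $1\le j\le L$; $\mathbf 1$ is the all-ones vector in $\mathbb{R}^M$; $\|\cdot\|_2$ is the Euclidean norm. *)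

From mathcomp Require Import all_boot all_order all_algebra.
From mathcomp Require Import all_classical all_reals all_analysis.
Set Implicit Arguments. Unset Strict Implicit. Unset Printing Implicit Defensive.
Import Order.TTheory GRing.Theory Num.Theory.
Local Open Scope ring_scope.

(* B is the M x L matrix with B_{ij} = (i/M)^j, 1 <= i <= M, 1 <= j <= L
   (0-based ordinals i, j stand for i+1, j+1). *)
Definition Bmat (R : realType) (M L : nat) : 'M[R]_(M, L) :=
  \matrix_(i < M, j < L) ((i.+1)%:R / M%:R) ^+ j.+1.

Definition ones (R : realType) (M : nat) : 'cV[R]_M := const_mx 1.

Definition norm2 (R : realType) (n : nat) (v : 'cV[R]_n) : R :=
  Num.sqrt (\sum_(i < n) v i 0 ^+ 2).

Definition binratio (R : realType) (M L : nat) : R :=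
  ('C(M + L + 1, L + 1))%:R / ('C(M, L + 1))%:R.

(* The columns of B sample x, ..., x^L at i/M, so the minimum is the distance
   from the constant vector 1 to the polynomials of degree at most L vanishing at
   0, sampled at 1, ..., M.  Let U(x) = x (x+1) ... (x+L) (M-x) ... (M-L+1-x) and
   let Q be the polynomial of degree L with x Q(x) = sum_k (-1)^k C(L,k) U(x-k).
   As U vanishes at the boundary, summation by parts moves this L-th difference
   onto the test function; it kills x^j for j < L, so r_i = Q(i)/Q(0) is
   orthogonal to the columns of B, while 1 - r lies in their span because
   Q - Q(0) has no constant term.  Hence r is the optimal residual, and
   ||r||^2 = sum Q(i) / Q(0).  With the test function 1/x the difference becomes
   L!/(x (x+1) ... (x+L)), and hockey-stick identities give
   sum Q(i) = L!^2 C(M,L+1) and Q(0) = L!^2 sum_{k<=L} C(M+k,L).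
   For the bounds, write the ratio as prod_{k<=L} (1 + (2k+1)/(M-k)) and compare
   each factor with exp((2k+1)/M) up to constants in the exponent.  This only
   fails for the upper bound when M <= 2L+1, and then the ratio is at most
   C(M+L+1,L+1) <= 2^(M+L+1) <= e^(5L), while L^2/M >= L/3. *)

From mathcomp Require Import all_boot all_order all_algebra.
From mathcomp Require Import all_classical all_reals all_analysis.
From mathcomp Require Import ring lra zify.
Set Implicit Arguments. Unset Strict Implicit. Unset Printing Implicit Defensive.
Import Order.TTheory GRing.Theory Num.Theory.
Local Open Scope ring_scope.

Lemma sum_sqr_residual (R : comPzRingType) m n (A : 'M[R]_(m, n))
    (b r : 'cV[R]_m) (w0 w : 'cV[R]_n) :
  b = A *m w0 + r -> A^T *m r = 0 ->
  \sum_i ((A *m w - b) i 0) ^+ 2 =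
  \sum_i ((A *m (w - w0)) i 0) ^+ 2 + \sum_i (r i 0) ^+ 2.
Proof.
move=> -> Ar0; set y := A *m (w - w0).
have cross : \sum_i y i 0 * r i 0 = 0.
  have yr0 : (y^T *m r) 0 0 = 0 by rewrite /y trmx_mul -mulmxA Ar0 mulmx0 mxE.
  by rewrite -[RHS]yr0 [RHS]mxE; apply: eq_bigr => i _; rewrite [y^T _ _]mxE.
have res i : (A *m w - (A *m w0 + r)) i 0 = y i 0 - r i 0.
  by rewrite /y mulmxBr !mxE; ring.
transitivity (\sum_i (y i 0 ^+ 2 + r i 0 ^+ 2) - 2 * \sum_i y i 0 * r i 0).
  by rewrite mulr_sumr -sumrB; apply: eq_bigr => i _; rewrite res; ring.
by rewrite cross mulr0 subr0 big_split.
Qed.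

Lemma norm2_least_squares (R : realType) m n (A : 'M[R]_(m, n))
    (b r : 'cV[R]_m) (w0 : 'cV[R]_n) :
  b = A *m w0 + r -> A^T *m r = 0 ->
  norm2 (A *m w0 - b) = norm2 r /\ forall w, norm2 r <= norm2 (A *m w - b).
Proof.
move=> br Ar0; rewrite /norm2; split.
  rewrite (sum_sqr_residual w0 br Ar0) subrr mulmx0 big1 ?add0r // => i _.
  by rewrite mxE expr0n.
move=> w; rewrite (sum_sqr_residual w br Ar0) ler_sqrt.
  by rewrite lerDr sumr_ge0 // => i _; apply: sqr_ge0.
by rewrite addr_ge0 ?sumr_ge0 // => i _; apply: sqr_ge0.
Qed.

(* [fdiff L F] is [(-1)^L] times the [L]-th forward difference of [F] at [0]. *)
Definition fdiff (R : comPzRingType) (L : nat) (F : nat -> R) : R :=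
  \sum_(k < L.+1) (-1) ^+ k * 'C(L, k)%:R * F k.

Section FiniteDifferences.
Variable R : comPzRingType.
Implicit Types (F G : nat -> R).

Lemma eq_fdiff L F G : F =1 G -> fdiff L F = fdiff L G.
Proof. by move=> FG; apply: eq_bigr => k _; rewrite FG. Qed.

Lemma fdiff0 F : fdiff 0 F = F 0%N.
Proof. by rewrite /fdiff big_ord1 expr0 bin0 !mul1r. Qed.

Lemma fdiffS L F : fdiff L.+1 F = fdiff L (fun k => F k - F k.+1).
Proof.
rewrite /fdiff big_ord_recl /= bin0 expr0 !mul1r.
under eq_bigr => i _ do rewrite /bump /= binS natrD mulrDr mulrDl exprS.
rewrite big_split /=.
under [RHS]eq_bigr => i _ do rewrite mulrBr.
rewrite sumrB addrA; congr (_ + _).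
  rewrite (big_ord_recr L) /= bin_small // mulr0 mul0r addr0.
  rewrite [in RHS]big_ord_recl /= bin0 expr0 !mul1r; congr (_ + _).
  by apply: eq_bigr => i _; rewrite exprS /bump /= add1n.
rewrite -sumrN; apply: eq_bigr => i _; rewrite /bump /= add1n mulN1r !mulNr //.
Qed.

Lemma fdiffSB L F : fdiff L.+1 F = fdiff L F - fdiff L (fun k => F k.+1).
Proof. by rewrite fdiffS /fdiff -sumrB; apply: eq_bigr => k _; rewrite mulrBr. Qed.

End FiniteDifferences.

Definition pdiff (R : idomainType) (a : R) (p : {poly R}) : {poly R} :=
  p - (p \Po ('X + a%:P)).

Section PolynomialDifferences.
Variables (R : idomainType) (a : R).

Lemma size_pdiff p : (size (pdiff a p) <= (size p).-1)%N.
Proof.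
rewrite /pdiff; have [p_small|p_large] := leqP (size p) 1.
  by rewrite (size1_polyC p_small) comp_polyC subrr size_poly0.
have size_comp : size (p \Po ('X + a%:P)) = size p.
  by rewrite size_comp_poly2 // size_XaddC.
have lead_comp : lead_coef (p \Po ('X + a%:P)) = lead_coef p.
  by rewrite lead_coef_comp ?size_XaddC // lead_coefXaddC expr1n mulr1.
apply/leq_sizeP => j le_j; rewrite coefB.
have [->|ne_j] := eqVneq j (size p).-1.
  by move: lead_comp; rewrite !lead_coefE size_comp => ->; rewrite subrr.
have : (size p <= j)%N by move: le_j ne_j p_large; lia.
by move=> large_j; rewrite !nth_default ?subrr ?size_comp.
Qed.

Lemma size_iter_pdiff L p : (size (iter L (pdiff a) p) <= size p - L)%N.
Proof.
elim: L => [|L IH]; first by rewrite subn0.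
by rewrite iterS (leq_trans (size_pdiff _)) // subnS; move: IH; lia.
Qed.

Lemma horner_iter_pdiff L p x :
  (iter L (pdiff a) p).[x] = fdiff L (fun k => p.[x + k%:R * a]).
Proof.
elim: L p => [|L IH] p; first by rewrite fdiff0 /= mul0r addr0.
rewrite iterSr IH fdiffS; apply: eq_fdiff => k.
by rewrite /pdiff hornerD hornerN horner_comp !hornerE -natr1 mulrDl mul1r addrA.
Qed.

End PolynomialDifferences.

Lemma fdiff_poly (R : idomainType) L (p : {poly R}) x :
  (size p <= L)%N -> fdiff L (fun k => p.[x + k%:R]) = 0.
Proof.
move=> size_p; under eq_fdiff => k do rewrite -[k%:R]mulr1.
rewrite -horner_iter_pdiff.
suff /size_poly_leq0P -> : (size (iter L (pdiff 1) p) <= 0)%N by rewrite horner0.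
by apply: (leq_trans (size_iter_pdiff _ _ _)); move: size_p; lia.
Qed.

Lemma fdiff_inv (R : numFieldType) L (j : R) : 0 < j ->
  fdiff L (fun k => (j + k%:R)^-1) = L`!%:R / \prod_(t < L.+1) (j + t%:R).
Proof.
have prod_gt0 (y : R) n : 0 < y -> 0 < \prod_(t < n) (y + t%:R).
  by move=> y_gt0; apply: prodr_gt0 => t _; rewrite ltr_wpDr.
have shift (y : R) k : y + k.+1%:R = (y + 1) + k%:R by rewrite -natr1 addrAC addrA.
elim: L j => [|L IH] j j_gt0; first by rewrite fdiff0 big_ord1 addr0 fact0 mul1r.
have j1_gt0 : 0 < j + 1 by rewrite ltr_wpDr.
rewrite fdiffSB IH //.
rewrite (eq_fdiff _ (G := fun k => ((j + 1) + k%:R)^-1)); last first.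
  by move=> k; rewrite shift.
rewrite IH //; set P := \prod_(t < L.+2) (j + t%:R).
have -> : \prod_(t < L.+1) (j + t%:R) = P / (j + L.+1%:R).
  by rewrite /P [in RHS]big_ord_recr /= mulfK // gt_eqF // ltr_wpDr.
have -> : \prod_(t < L.+1) (j + 1 + t%:R) = P / j.
  rewrite /P [in RHS]big_ord_recl addr0 [RHS]mulrC mulKf ?gt_eqF //.
  by apply: eq_bigr => t _; rewrite lift0 shift.
have P_neq0 : P != 0 by rewrite gt_eqF // prod_gt0.
rewrite factS natrM -natr1; field.
by rewrite P_neq0 !gt_eqF // ltr_wpDr.
Qed.

Lemma eq_poly_horner (R : numDomainType) (p q : {poly R}) :
  (forall x, p.[x] = q.[x]) -> p = q.
Proof.
move=> pq; apply/eqP; rewrite -subr_eq0; apply/negPn/negP => pq_neq0.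
pose rs := [seq (i%:R : R) | i <- iota 0 (size (p - q))].
have roots : all (root (p - q)) rs.
  by apply/allP => x _; rewrite /root !hornerE pq subrr.
have uniq_rs : uniq rs.
  by rewrite map_inj_uniq ?iota_uniq // => m n /eqP; rewrite eqr_nat => /eqP.
by have := max_poly_roots pq_neq0 roots uniq_rs; rewrite size_map size_iota ltnn.
Qed.

Lemma natr_ffact (R : comPzRingType) n m :
  (n ^_ m)%:R = \prod_(t < m) (n%:R - t%:R) :> R.
Proof.
have [le_mn|lt_nm] := leqP m n.
  rewrite ffact_prod natr_prod; apply: eq_bigr => t _.
  by rewrite natrB // (leq_trans _ le_mn) // ltnW.
by rewrite ffact_small // (bigD1 (Ordinal lt_nm)) //= subrr mul0r.
Qed.

Lemma hockey_stick n L K :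
  ('C(n, L.+1) + \sum_(k < K) 'C(n + k, L) = 'C(n + K, L.+1))%N.
Proof.
elim: K => [|K IH]; first by rewrite big_ord0 !addn0.
by rewrite big_ord_recr /= addnA IH addnS binS addnC.
Qed.

Lemma size_prod_linear (R : nzSemiRingType) n (F : 'I_n -> {poly R}) :
  (forall i, size (F i) <= 2)%N -> (size (\prod_(i < n) F i)%R <= n.+1)%N.
Proof.
move=> F_le2; apply: leq_trans (size_poly_prod_leq _ _) _.
have : (\sum_i size (F i) <= \sum_(i < n) 2)%N by apply: leq_sum => i _.
by rewrite sum_nat_const card_ord; lia.
Qed.

Lemma prod_ord_sub (R : comPzRingType) k :
  \prod_(t < k) (t%:R - k%:R : R) = (-1) ^+ k * k`!%:R.
Proof.
elim: k => [|k IH]; first by rewrite big_ord0 expr0 mulr1.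
rewrite big_ord_recl /= sub0r.
rewrite (eq_bigr (fun t : 'I_k => t%:R - k%:R)); last first.
  by move=> t _; rewrite /bump /= add1n -!natr1; ring.
by rewrite IH factS natrM exprS; ring.
Qed.

Lemma prod_ord_sub_neq (R : comPzRingType) k L : (k <= L)%N ->
  \prod_(t < L.+1 | t != k :> nat) (t%:R - k%:R : R) =
  (-1) ^+ k * (k`! * (L - k)`!)%:R.
Proof.
elim: L => [|L IH] le_kL.
  have -> : k = 0%N by lia.
  by rewrite big_mkcond big_ord1 /= fact0 expr0 !mulr1.
rewrite big_mkcond big_ord_recr /=.
have [->|ne_kL] := eqVneq k L.+1.
  rewrite /= mulr1 subnn fact0 muln1 -(prod_ord_sub R L.+1).
  apply: eq_bigr => t _; rewrite ifT //.
  by apply/negP => /eqP t_eq; have := ltn_ord t; rewrite t_eq ltnn.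
have le_kL' : (k <= L)%N by lia.
by rewrite -big_mkcond IH // subSn // factS !natrM -subSn // natrB // /=; ring.
Qed.

Lemma sum_bin_rev M L : (L < M)%N ->
  (\sum_(m < M - L) 'C(M - m.+1, L))%N = 'C(M, L.+1).
Proof.
move=> lt_LM; rewrite -(big_mkord xpredT (fun m => 'C(M - m.+1, L))).
rewrite big_rev_mkord subn0.
rewrite (eq_bigr (fun k : 'I_(M - L) => 'C(L + k, L))); last first.
  by move=> k _; congr 'C(_, _); have := ltn_ord k; lia.
by have := hockey_stick L L (M - L); rewrite bin_small // add0n subnKC 1?ltnW.
Qed.

Section SummationByParts.
Variables (R : comPzRingType) (L M : nat) (u h : R -> R).
Hypothesis lt_LM : (L < M)%N.
Hypothesis u_lo : forall n, (n <= L)%N -> u (- n%:R) = 0.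
Hypothesis u_hi : forall n, (n < L)%N -> u (M%:R - n%:R) = 0.

(* The terms with [i.+1 - k] outside [1, M - L] are roots of [u]. *)
Lemma sum_shift_weight k : (k <= L)%N ->
  \sum_(i < M) u (i.+1%:R - k%:R) * h i.+1%:R =
  \sum_(m < M - L) u m.+1%:R * h (m.+1%:R + k%:R).
Proof.
move=> le_kL.
rewrite -(big_mkord xpredT (fun i => u (i.+1%:R - k%:R) * h i.+1%:R)).
rewrite (@big_cat_nat _ _ _ k) /=; [|by []|by lia].
rewrite (@big_cat_nat _ _ _ (k + (M - L)) k) /=; [|by lia|by lia].
rewrite big1_seq ?add0r; last first.
  move=> i /andP[_]; rewrite mem_index_iota => /andP[_ lt_ik].
  by rewrite -opprB -natrB // u_lo ?mul0r //; lia.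
rewrite [X in _ + X]big1_seq ?addr0; last first.
  move=> i /andP[_]; rewrite mem_index_iota => /andP[le_i lt_i].
  have -> : i.+1%:R - k%:R = M%:R - (M + k - i.+1)%:R :> R.
    by rewrite natrB ?natrD; [ring | lia].
  by rewrite u_hi ?mul0r //; lia.
rewrite -{1}(add0n k) big_addn (_ : k + (M - L) - k = M - L)%N; last by lia.
by rewrite big_mkord; apply: eq_bigr => m _; rewrite -addSn !natrD addrK.
Qed.

Lemma summation_by_parts :
  \sum_(i < M) fdiff L (fun k => u (i.+1%:R - k%:R)) * h i.+1%:R =
  \sum_(m < M - L) u m.+1%:R * fdiff L (fun k => h (m.+1%:R + k%:R)).
Proof.
rewrite /fdiff.
under eq_bigr => i _ do rewrite mulr_suml.
under [RHS]eq_bigr => m _ do rewrite mulr_sumr.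
rewrite exchange_big [RHS]exchange_big; apply: eq_bigr => k _.
set c := _ * 'C(L, k)%:R.
transitivity (c * \sum_(i < M) u (i.+1%:R - k%:R) * h i.+1%:R).
  by rewrite mulr_sumr; apply: eq_bigr => i _; rewrite !mulrA.
rewrite sum_shift_weight ?mulr_sumr; last by rewrite -ltnS.
by apply: eq_bigr => m _; rewrite mulrCA.
Qed.

End SummationByParts.

Section KernelPolynomial.
Variables (R : numFieldType) (L M : nat).

Definition Upoly : {poly R} :=
  \prod_(t < L.+1) ('X + t%:R%:P) * \prod_(t < L) ((M%:R - t%:R)%:P - 'X).

Lemma horner_Upoly x :
  Upoly.[x] = \prod_(t < L.+1) (x + t%:R) * \prod_(t < L) (M%:R - t%:R - x).
Proof.
rewrite hornerM !horner_prod.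
by congr (_ * _); apply: eq_bigr => t _; rewrite !hornerE.
Qed.

Lemma Upoly_root_lo n : (n <= L)%N -> Upoly.[- n%:R] = 0.
Proof.
move=> le_nL; rewrite horner_Upoly (bigD1 (Ordinal (le_nL : (n < L.+1)%N))) //=.
by rewrite addNr !mul0r.
Qed.

Lemma Upoly_root_hi n : (n < L)%N -> Upoly.[M%:R - n%:R] = 0.
Proof.
by move=> lt_nL; rewrite horner_Upoly (bigD1 (Ordinal lt_nL)) //= subrr mul0r mulr0.
Qed.

Lemma size_Upoly : (size Upoly <= L.*2.+2)%N.
Proof.
apply: leq_trans (size_polyMleq _ _) _.
have size_lo := size_prod_linear (fun t : 'I_L.+1 => eq_leq (size_XaddC (t%:R : R))).
have size_hi : forall t : 'I_L, (size ((M%:R - t%:R)%:P - 'X : {poly R})%R <= 2)%N.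
  move=> t; apply: leq_trans (size_polyD _ _) _.
  by rewrite size_polyN size_polyX geq_max (leq_trans (size_polyC_leq1 _)).
move: size_lo (size_prod_linear size_hi); set a := size _; set b := size _.
by rewrite -addnn; lia.
Qed.

(* [Upoly (x - k) / x], written as a product so that [Qpoly] is visibly a
   polynomial and its value at [0] can be read off. *)
Definition Rpoly (k : nat) : {poly R} :=
  \prod_(t < L.+1 | t != k :> nat) ('X + (t%:R - k%:R)%:P) *
  \prod_(t < L) ((M%:R - t%:R + k%:R)%:P - 'X).

Lemma horner_Rpoly_mulX k x : (k <= L)%N -> (Rpoly k).[x] * x = Upoly.[x - k%:R].
Proof.
move=> le_kL; rewrite horner_Upoly (bigD1 (Ordinal (le_kL : (k < L.+1)%N))) //= subrK.
rewrite hornerM !horner_prod mulrC mulrA; congr (_ * _ * _).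
  apply: eq_big => [t|t _]; first by rewrite -val_eqE.
  by rewrite !hornerE addrAC.
by apply: eq_bigr => t _; rewrite !hornerE; ring.
Qed.

Lemma horner_Rpoly0 k : (k <= L)%N ->
  (Rpoly k).[0] = (-1) ^+ k * (k`! * (L - k)`! * (M + k) ^_ L)%:R.
Proof.
move=> le_kL; rewrite hornerM !horner_prod natrM mulrA -prod_ord_sub_neq //.
congr (_ * _); first by apply: eq_bigr => t _; rewrite !hornerE ?add0r.
rewrite natr_ffact; apply: eq_bigr => t _.
by rewrite !hornerE natrD; ring.
Qed.

Definition Qpoly : {poly R} :=
  \sum_(k < L.+1) ((-1) ^+ k * 'C(L, k)%:R) *: Rpoly k.

Lemma horner_Qpoly_mulX x : Qpoly.[x] * x = fdiff L (fun k => Upoly.[x - k%:R]).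
Proof.
rewrite horner_sum mulr_suml; apply: eq_bigr => k _.
by rewrite hornerZ -mulrA horner_Rpoly_mulX // -ltnS.
Qed.

Lemma size_Qpoly : (size Qpoly <= L.+1)%N.
Proof.
have QX_diff : Qpoly * 'X = iter L (pdiff (-1)) Upoly.
  apply: eq_poly_horner => x; rewrite hornerMX horner_Qpoly_mulX horner_iter_pdiff.
  by apply: eq_fdiff => k; rewrite mulrN1.
have : (size (Qpoly * 'X)%R <= L.+2)%N.
  rewrite QX_diff (leq_trans (size_iter_pdiff _ _ _)) //.
  by rewrite leq_subLR (leq_trans size_Upoly) // -addnn !addnS.
have [Q0|Q_neq0] := eqVneq Qpoly 0; first by rewrite Q0 size_poly0.
by rewrite size_mulX.
Qed.

Lemma horner_Qpoly_expand x :
  Qpoly.[x] = Qpoly.[0] + \sum_(j < L) Qpoly`_j.+1 * x ^+ j.+1.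
Proof.
by rewrite (horner_coef_wide _ size_Qpoly) big_ord_recl horner_coef0 expr0 mulr1.
Qed.

Lemma horner_Qpoly0 : Qpoly.[0] = (L`! ^ 2 * \sum_(k < L.+1) 'C(M + k, L))%:R.
Proof.
rewrite horner_sum big_distrr natr_sum; apply: eq_bigr => k _.
have le_kL : (k <= L)%N by rewrite -ltnS.
have sign_sqr : (-1) ^+ k * (-1) ^+ k = 1 :> R.
  by rewrite -exprMn mulrNN mulr1 expr1n.
rewrite hornerZ horner_Rpoly0 // mulrACA sign_sqr mul1r -natrM; congr _%:R.
by rewrite mulnA bin_fact // -bin_ffact /=; ring.
Qed.

Hypothesis lt_LM : (L < M)%N.

Lemma sum_Qpoly_mulX (h : R -> R) :
  \sum_(i < M) Qpoly.[i.+1%:R] * (i.+1%:R * h i.+1%:R) =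
  \sum_(m < M - L) Upoly.[m.+1%:R] * fdiff L (fun k => h (m.+1%:R + k%:R)).
Proof.
under eq_bigr => i _ do rewrite mulrA horner_Qpoly_mulX.
exact: (summation_by_parts _ lt_LM Upoly_root_lo Upoly_root_hi).
Qed.

Lemma Qpoly_orthogonal j : (j < L)%N ->
  \sum_(i < M) Qpoly.[i.+1%:R] * i.+1%:R ^+ j.+1 = 0.
Proof.
move=> lt_jL; under eq_bigr => i _ do rewrite exprS.
rewrite (sum_Qpoly_mulX (fun x => x ^+ j)); apply: big1 => m _.
rewrite (eq_fdiff _ (G := fun k => ('X^j : {poly R}).[m.+1%:R + k%:R])).
  by rewrite fdiff_poly ?mulr0 // size_polyXn.
by move=> k; rewrite hornerXn.
Qed.

Lemma sum_Qpoly : \sum_(i < M) Qpoly.[i.+1%:R] = (L`! ^ 2 * 'C(M, L.+1))%:R.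
Proof.
transitivity (\sum_(i < M) Qpoly.[i.+1%:R] * (i.+1%:R * i.+1%:R^-1)).
  by apply: eq_bigr => i _; rewrite mulfV ?mulr1 ?pnatr_eq0.
rewrite (sum_Qpoly_mulX GRing.inv) -sum_bin_rev // natrM natr_sum mulr_sumr.
apply: eq_bigr => m _; rewrite fdiff_inv ?ltr0Sn // horner_Upoly.
have lt_mM : (m.+1 <= M)%N by have := ltn_ord m; lia.
have -> : \prod_(t < L) (M%:R - t%:R - m.+1%:R) = ((M - m.+1) ^_ L)%:R :> R.
  by rewrite natr_ffact natrB //; apply: eq_bigr => t _; ring.
rewrite -natrM -mulnn -mulnA [(L`! * 'C(_, _))%N]mulnC bin_ffact natrM.
have : 0 < \prod_(t < L.+1) (m.+1%:R + t%:R) :> R.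
  by apply: prodr_gt0 => t _; rewrite -natrD ltr0n addSn.
by move: (\prod_(t < _) _) => P P_gt0; field; rewrite gt_eqF.
Qed.

Lemma sum_Qpoly_sqr :
  \sum_(i < M) Qpoly.[i.+1%:R] ^+ 2 = Qpoly.[0] * \sum_(i < M) Qpoly.[i.+1%:R].
Proof.
apply/eqP; rewrite mulr_sumr -subr_eq0 -sumrB; apply/eqP.
transitivity (\sum_(i < M) \sum_(j < L)
    Qpoly`_j.+1 * (Qpoly.[i.+1%:R] * i.+1%:R ^+ j.+1)).
  apply: eq_bigr => i _; rewrite expr2 -mulrBl {1}horner_Qpoly_expand addrC addKr.
  by rewrite mulr_suml; apply: eq_bigr => j _; ring.
rewrite exchange_big /=; apply: big1 => j _.
by rewrite -mulr_sumr Qpoly_orthogonal ?mulr0.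
Qed.

End KernelPolynomial.

Lemma binratio_subr1 (R : realType) M L : (L < M)%N ->
  binratio R M L - 1 = (\sum_(k < L.+1) 'C(M + k, L))%:R / 'C(M, L.+1)%:R.
Proof.
move=> lt_LM; have C_neq0 : 'C(M, L.+1)%:R != 0 :> R.
  by rewrite pnatr_eq0 -lt0n bin_gt0.
by rewrite /binratio !addn1 -addnS -(hockey_stick M L L.+1) natrD; field.
Qed.

Lemma Bmat_least_squares (R : realType) L M : (L < M)%N ->
  (exists w : 'cV[R]_L,
     norm2 (Bmat R M L *m w - ones R M) = (Num.sqrt (binratio R M L - 1))^-1) /\
  (forall w : 'cV[R]_L,
     (Num.sqrt (binratio R M L - 1))^-1 <= norm2 (Bmat R M L *m w - ones R M)).
Proof.
move=> lt_LM; set Q := Qpoly R L M; set c := Q.[0].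
set T := (\sum_(k < L.+1) 'C(M + k, L))%N.
have T_gt0 : (0 < T)%N by rewrite /T big_ord_recl addn_gt0 bin_gt0 /= addn0 ltnW.
have c_gt0 : 0 < c by rewrite /c /Q horner_Qpoly0 ltr0n muln_gt0 expn_gt0 fact_gt0.
have M_neq0 : M%:R != 0 :> R by rewrite pnatr_eq0 -lt0n (leq_ltn_trans _ lt_LM).
pose r : 'cV[R]_M := \col_i (Q.[i.+1%:R] / c).
pose w0 : 'cV[R]_L := \col_j (- Q`_j.+1 * M%:R ^+ j.+1 / c).
have r_orth : (Bmat R M L)^T *m r = 0.
  apply/matrixP => j k; rewrite ord1 !mxE.
  transitivity ((c * M%:R ^+ j.+1)^-1 *
                \sum_(i < M) Q.[i.+1%:R] * i.+1%:R ^+ j.+1).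
    rewrite mulr_sumr; apply: eq_bigr => i _; rewrite !mxE exprMn exprVn.
    by field; rewrite expf_neq0 // gt_eqF.
  by rewrite Qpoly_orthogonal ?mulr0.
have ones_decomp : ones R M = Bmat R M L *m w0 + r.
  apply/matrixP => i k; rewrite ord1 !mxE.
  have w0_term (j : 'I_L) :
      Bmat R M L i j * w0 j 0 = - c^-1 * (Q`_j.+1 * i.+1%:R ^+ j.+1).
    by rewrite !mxE exprMn exprVn; field; rewrite expf_neq0 // gt_eqF.
  under eq_bigr => j _ do rewrite w0_term.
  by rewrite -mulr_sumr [Q.[_]]horner_Qpoly_expand -/Q -/c; field; rewrite gt_eqF.
have norm_r : norm2 r = (Num.sqrt (binratio R M L - 1))^-1.
  rewrite /norm2 binratio_subr1 // -sqrtrV ?divr_ge0 // invf_div; congr Num.sqrt.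
  under eq_bigr => i _ do rewrite mxE expr_div_n.
  rewrite -mulr_suml sum_Qpoly_sqr // sum_Qpoly // /c horner_Qpoly0 !natrM.
  by field; rewrite !pnatr_eq0 -!lt0n T_gt0 fact_gt0.
have [w0_opt r_min] := norm2_least_squares ones_decomp r_orth.
by rewrite -norm_r; split; [exists w0 |].
Qed.

Lemma binratio_prod (R : realType) M L : (L < M)%N ->
  binratio R M L = \prod_(k < L.+1) (1 + (2 * k%:R + 1) / (M%:R - k%:R)).
Proof.
move=> lt_LM; transitivity (((M + L).+1 ^_ L.+1)%:R / (M ^_ L.+1)%:R : R).
  rewrite /binratio !addn1 -!bin_ffact; have := fact_gt0 L.+1.
  move: (L.+1)`! => f f_gt0.
  by rewrite !natrM -mulf_div divff ?mulr1 ?pnatr_eq0 -?lt0n.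
rewrite !natr_ffact [in X in X / _](reindex_inj rev_ord_inj) -prodf_div.
apply: eq_bigr => k _; have le_kL : (k <= L)%N by rewrite -ltnS.
have Mk_neq0 : M%:R - k%:R != 0 :> R by rewrite -natrB ?pnatr_eq0 -?lt0n; lia.
by rewrite /= subSS natrB // -natr1 natrD; field.
Qed.

Lemma sum_odd (R : comPzRingType) n : \sum_(k < n) (2 * k%:R + 1 : R) = n%:R ^+ 2.
Proof.
elim: n => [|n IH]; first by rewrite big_ord0 expr0n.
by rewrite big_ord_recr /= IH -natr1; ring.
Qed.

Lemma expR_le1D3x (R : realType) (z : R) :
  0 <= z -> z <= 2 / 3 -> expR z <= 1 + 3 * z.
Proof.
move=> z_ge0 z_le; have expRN_ge := expR_ge1Dx (- z); rewrite expRN in expRN_ge.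
have expR_gt0z := expR_gt0 z.
have : (1 - z) * expR z <= 1.
  by rewrite -[leRHS](mulVf (lt0r_neq0 expR_gt0z)) ler_pM2r.
have : 0 <= z * (2 - 3 * z) by rewrite mulr_ge0 //; lra.
nra.
Qed.

Lemma expR_le_binratio (R : realType) M L : (L < M)%N ->
  expR (3^-1 * (L%:R ^+ 2 / M%:R)) <= binratio R M L.
Proof.
move=> lt_LM; have M_gt0 : 0 < M%:R :> R by rewrite ltr0n (leq_ltn_trans _ lt_LM).
have le_LM : L%:R + 1 <= M%:R :> R by rewrite natr1 ler_nat.
rewrite binratio_prod //.
apply: (@le_trans _ _ (expR (\sum_(k < L.+1) (2 * k%:R + 1) / (3 * M%:R)))).
  have -> : 3^-1 * (L%:R ^+ 2 / M%:R) = L%:R ^+ 2 / (3 * M%:R) :> R.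
    by field; rewrite gt_eqF.
  rewrite ler_expR -mulr_suml sum_odd ler_pM2r ?invr_gt0 ?mulr_gt0 //.
  by rewrite lerXn2r ?nnegrE ?ler0n // ler_nat.
rewrite expR_sum; apply: ler_prod => k _; rewrite expR_ge0 /=.
have /andP[k_ge0 k_le] : (0 <= k%:R :> R) && (k%:R <= L%:R :> R).
  by rewrite ler0n ler_nat -ltnS ltn_ord.
apply: (@le_trans _ _ (1 + 3 * ((2 * k%:R + 1) / (3 * M%:R)))).
  apply: expR_le1D3x; first by rewrite divr_ge0 //; lra.
  by rewrite ler_pdivrMr ?mulr_gt0 //; lra.
have -> : 3 * ((2 * k%:R + 1) / (3 * M%:R)) = (2 * k%:R + 1) / M%:R :> R.
  by field; rewrite gt_eqF.
rewrite lerD2l ler_wpM2l ?lef_pV2 ?posrE; lra.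
Qed.

Lemma binratio_le_expR_large (R : realType) M L : (2 * L.+1 <= M)%N ->
  binratio R M L <= expR (2 * L.+1%:R ^+ 2 / M%:R).
Proof.
move=> large; have M_gt0 : 0 < M%:R :> R by rewrite ltr0n; lia.
have large_R : 2 * (L%:R + 1) <= M%:R :> R by rewrite natr1 -natrM ler_nat.
rewrite binratio_prod; last by lia.
apply: (@le_trans _ _ (expR (\sum_(k < L.+1) 2 * (2 * k%:R + 1) / M%:R))); last first.
  by rewrite ler_expR -mulr_suml -mulr_sumr sum_odd.
rewrite expR_sum; apply: ler_prod => k _.
have k_le : k%:R <= L%:R :> R by rewrite ler_nat -ltnS ltn_ord.
have Mk_gt0 : 0 < M%:R - k%:R :> R by lra.
rewrite addr_ge0 ?divr_ge0 ?ler0n //=; last by lra.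
apply: (le_trans (expR_ge1Dx _)); rewrite ler_expR -subr_ge0.
have -> : 2 * (2 * k%:R + 1) / M%:R - (2 * k%:R + 1) / (M%:R - k%:R) =
    (2 * k%:R + 1) * (M%:R - 2 * k%:R) / (M%:R * (M%:R - k%:R)) :> R.
  by field; rewrite !gt_eqF.
by rewrite divr_ge0 ?mulr_ge0 ?ler0n //; lra.
Qed.

Lemma leq_bin_exp2 n k : ('C(n, k) <= 2 ^ n)%N.
Proof.
elim: n k => [|n IH] [|k] //; first by rewrite bin0 expn_gt0.
by rewrite binS expnS mul2n -addnn leq_add.
Qed.

Lemma binratio_le_exp2 (R : realType) M L : (L < M)%N ->
  binratio R M L <= 2 ^+ (M + L + 1).
Proof.
move=> lt_LM; have C_ge1 : 1 <= 'C(M, L + 1)%:R :> R by rewrite ler1n bin_gt0 addn1.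
apply: (@le_trans _ _ 'C(M + L + 1, L + 1)%:R).
  by rewrite /binratio ler_pdivrMr ?ler_peMr //; lra.
by rewrite -natrX ler_nat leq_bin_exp2.
Qed.

Lemma exp2_le_expR (R : realType) n : 2 ^+ n <= expR n%:R :> R.
Proof.
rewrite -[n%:R]mulr1 expRM_natl lerXn2r ?nnegrE ?expR_ge0 //.
by have := expR_ge1Dx (1 : R); lra.
Qed.

Lemma binratio_le_expR (R : realType) M L : (0 < L)%N -> (L < M)%N ->
  binratio R M L <= expR (15 * (L%:R ^+ 2 / M%:R)).
Proof.
move=> L_gt0 lt_LM; have M_gt0 : 0 < M%:R :> R by rewrite ltr0n; lia.
have L_ge1 : 1 <= L%:R :> R by rewrite ler1n.
have [large|small] := leqP (2 * L.+1) M.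
  apply: le_trans (binratio_le_expR_large _ large) _.
  rewrite ler_expR mulrA ler_pM2r ?invr_gt0 // -natr1; nra.
apply: le_trans (binratio_le_exp2 _ lt_LM) _.
apply: le_trans (exp2_le_expR _ _) _; rewrite ler_expR.
have small_R : M%:R <= 3 * L%:R :> R by rewrite -natrM ler_nat; lia.
rewrite mulrA ler_pdivlMr // !natrD; nra.
Qed.

Theorem lemma1 (R : realType) :
  (forall L M : nat, (1 <= L)%N -> (L + 1 <= M)%N ->
     (exists w : 'cV[R]_L,
        norm2 (Bmat R M L *m w - ones R M) = (Num.sqrt (binratio R M L - 1))^-1) /\
     (forall w : 'cV[R]_L,
        (Num.sqrt (binratio R M L - 1))^-1 <= norm2 (Bmat R M L *m w - ones R M))) /\
  (exists c1 c2 : R, 0 < c1 /\ c1 <= c2 /\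
     forall L M : nat, (1 <= L)%N -> (L + 1 <= M)%N ->
       expR (c1 * (L%:R ^+ 2 / M%:R)) <= binratio R M L /\
       binratio R M L <= expR (c2 * (L%:R ^+ 2 / M%:R))).
Proof.
split=> [L M _ le_LM | ]; first by apply: Bmat_least_squares; rewrite -addn1.
exists 3^-1, 15; split; first by lra.
split; first by lra.
move=> L M L_ge1 le_LM; have lt_LM : (L < M)%N by rewrite -addn1.
by split; [exact: expR_le_binratio | exact: binratio_le_expR].
Qed.
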